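(* Let $\lambda$ be a partition, $n\ge\ell(\lambda)$, and $M\in\mathrm{MLQ}(\lambda,n)$. Then $\operatorname{maj}_G(M)=\operatorname{maj}(M)$.
   Context: For a partition $\lambda$ with conjugate $\lambda'$ and $L=\lambda_1$, $\mathrm{MLQ}(\lambda,n)$ is the set of tuples $M=(B_1,\dots,B_L)$ of subsets of $[n]$ with $|B_j|=\lambda'_j$, drawn with rows $1..L$ bottom to top, columns $1..n$ left to right; cells $(r,j)$ with $j\in B_r$ are particles (balls), the others anti-particles. Major index $\operatorname{maj}$: for $r=L,\dots,2$, unlabelled balls of row $r$ get label $r$; balls of row $r$ in decreasing label order (left to right among ties) are each paired with the first unlabelled ball of row $r-1$ weakly to the right cyclically modulo $n$, which gets the same label; the pairing wraps if the lower ball is strictly left of the upper one. $\operatorname{maj}(M)=\sum(\ell(p)-r(p)+1)$ over wrapping pairings, $r(p)$ the row of the upper ball and $\ell(p)$ its label. Generalized major index $\operatorname{maj}_G$: label all cells. Row $L$: particles $L$, anti-particles $L-1$. For $r=L-1,\dots,1$: with $w_1,\dots,w_n$ the labels of row $r+1$, order columns $i_1,\dots,i_n$ with $w_{i_1}\ge\cdots\ge w_{i_n}$, ties by increasing column; $s=|B_r|$. Particle phase: for $k=1,\dots,s$, cell $(r+1,i_k)$ is paired with the first unlabelled particle of row $r$ weakly right of column $i_k$ cyclically, which gets label $w_{i_k}$; wrapping if its column is $<i_k$. Anti-particle phase: for $k=n,\dots,s+1$, cell $(r+1,i_k)$ is paired with the first unlabelled anti-particle of row $r$ weakly left of column $i_k$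 cyclically, which gets label $w_{i_k}-1$; wrapping if its column is $>i_k$. $\operatorname{maj}_G(M)=\sum_p(\ell(p)-r(p)+1)-\sum_{p'}(\ell(p')-r(p')+1)$, $p$ over wrapping particle-phase pairings, $p'$ over wrapping anti-particle-phase pairings, $r(\cdot)$ the row and $\ell(\cdot)$ the label of the upper cell. *)

From mathcomp Require Import all_boot all_order all_algebra.
Set Implicit Arguments. Unset Strict Implicit. Unset Printing Implicit Defensive.
Import GRing.Theory Num.Theory.
Local Open Scope ring_scope.

Definition is_partition (la : seq nat) : bool :=
  sorted geq la && all (fun p => 0 < p)%N la.

Definition plength (la : seq nat) : nat := size la.
Definition pfirst (la : seq nat) : nat := head 0%N la.
Definition conj_part (la : seq nat) (j : nat) : nat := count (fun p => j <= p)%N la.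

(* Rows are 1-based: row M r is B_r. Columns 'I_n are 0-based here
   (column c of the paper is ordinal c-1); this is only a relabelling. *)
Definition row (n : nat) (M : seq {set 'I_n}) (r : nat) : {set 'I_n} :=
  nth set0 M r.-1.

Definition MLQ (la : seq nat) (n : nat) (M : seq {set 'I_n}) : Prop :=
  size M = pfirst la /\
  forall j : nat, (1 <= j <= pfirst la)%N -> #|row M j| = conj_part la j.

Definition cols (n : nat) (B : {set 'I_n}) : seq nat := [seq val x | x <- enum B].

Definition cyc_order (n i : nat) (right : bool) : seq nat :=
  [seq (if right then (i + k) %% n else (i + (n - k)) %% n)%N | k <- iota 0 n].

Definition lab_of (asg : seq (nat * int)) (j : nat) (dflt : int) : int :=
  if j \in map fst asg then nth 0 (map snd asg) (index j (map fst asg)) else dflt.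

(* One pairing: the upper cell in column i, carrying the label [lab] to be
   given to the lower cell, with contribution [c] if the pairing wraps, is
   paired with the first (cyclically, weakly right if [right], weakly left
   otherwise) column j of the lower row that satisfies [avail] and is not yet
   labelled.  State: (assignments of the lower row, accumulated wrap sum). *)
Definition pair_one (n : nat) (right : bool) (avail : pred nat)
    (st : seq (nat * int) * int) (x : nat * int * int) : seq (nat * int) * int :=
  let: (asg, acc) := st in
  let: (i, lab, c) := x in
  match [seq j <- cyc_order n i right | avail j && (j \notin map fst asg)] with
  | [::] => st
  | j :: _ => ((j, lab) :: asg,
               if (if right then j < i else i < j)%N then acc + c else acc)
  end.

Definition pair_all (n : nat) (right : bool) (avail : pred nat)
    (xs : seq (nat * int * int)) : seq (nat * int) * int :=
  foldl (pair_one n right avail) ([::], 0) xs.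

Definition lab_order (a b : nat * int) : bool :=
  (b.2 < a.2) || ((a.2 == b.2) && (a.1 <= b.1)%N).

(* The algorithms are written on the particle columns of each row:
   [R r] is the (duplicate-free) list of particle columns of row r. *)

(* Processing row r (upper), given labels [asg] of balls of row r already
   labelled by pairings from row r+1. *)
Definition maj_step (n : nat) (R : nat -> seq nat)
    (st : seq (nat * int) * int) (r : nat) : seq (nat * int) * int :=
  let: (asg, acc) := st in
  let labelled := [seq (j, lab_of asg j r%:Z) | j <- R r] in
  let ordered := sort lab_order labelled in
  let: (asg', w) :=
    pair_all n true (fun j => j \in R r.-1)
             [seq (p.1, p.2, p.2 - r%:Z + 1) | p <- ordered] in
  (asg', acc + w).

(* rows r = L, L-1, ..., 2 *)
Definition maj_cols (L n : nat) (R : nat -> seq nat) : int :=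
  (foldl (maj_step n R) ([::], 0) [seq (L - k)%N | k <- iota 0 L.-1]).2.

Definition maj (n : nat) (la : seq nat) (M : seq {set 'I_n}) : int :=
  maj_cols (pfirst la) n (fun r => cols (row M r)).

(* state: (full labels of row r+1 as (column, label) for all columns, acc) *)
Definition majG_step (n : nat) (R : nat -> seq nat)
    (st : seq (nat * int) * int) (r : nat) : seq (nat * int) * int :=
  let: (w, acc) := st in
  let ordered := sort lab_order w in
  let s := size (R r) in
  let: (asgP, accP) :=
    pair_all n true (fun j => j \in R r)
      [seq (p.1, p.2, p.2 - (r.+1)%:Z + 1) | p <- take s ordered] in
  let: (asgA, accA) :=
    pair_all n false (fun j => j \notin R r)
      [seq (p.1, p.2 - 1, p.2 - (r.+1)%:Z + 1) | p <- rev (drop s ordered)] in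
  (asgP ++ asgA, acc + accP - accA).

(* row L labelled directly; then rows r = L-1, ..., 1 *)
Definition majG_cols (L n : nat) (R : nat -> seq nat) : int :=
  let top := [seq (j, if j \in R L then L%:Z else L%:Z - 1) | j <- iota 0 n] in
  (foldl (majG_step n R) (top, 0) [seq (L.-1 - k)%N | k <- iota 0 L.-1]).2.

Definition majG (n : nat) (la : seq nat) (M : seq {set 'I_n}) : int :=
  majG_cols (pfirst la) n (fun r => cols (row M r)).

(* Run side by side, the two algorithms keep the following invariant: the generalized
   labelling of row r is, as a multiset, the one in which every particle carries its maj label
   (r for a ball of row r reached by no maj pairing) and every anti-particle carries r - 1.
   If it holds for row r + 1, then, as |B_r| >= |B_(r+1)|, the |B_r| largest labels of row r + 1
   are those of its particles, in the order used by maj, followed by |B_r| - |B_(r+1)|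
   anti-particles of label r.  So the particle phase first performs exactly the maj pairings
   from row r + 1 and then gives label r to the remaining particles of row r, while the
   anti-particle phase gives label r - 1 to every anti-particle of row r: the invariant holds for
   row r.  All pairings beyond the maj ones start from a label r in row r + 1, so they contribute
   r - (r + 1) + 1 = 0 whether or not they wrap, and the wrap sums agree row by row. *)

From mathcomp Require Import all_boot all_order ssralg ssrnum ssrint zify.

Set Implicit Arguments.
Unset Strict Implicit.
Unset Printing Implicit Defensive.

Import Order.TTheory GRing.Theory.

Lemma mem_cyc_order n i right d : i < n -> (d \in cyc_order n i right) = (d < n).
Proof.
move=> lt_i_n; have n_gt0 : 0 < n by apply: leq_ltn_trans lt_i_n.
apply/mapP/idP => [[k _ ->]|lt_d_n]; first by case: right; rewrite ltn_pmod.
case: right.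
  exists (if i <= d then d - i else n + d - i); first by rewrite mem_iota; case: ifP; lia.
  case: ifP => le_i_d; first by rewrite subnKC // modn_small.
  by rewrite (_ : i + _ = d + n) ?modnDr ?modn_small //; lia.
exists (if d <= i then i - d else n + i - d); first by rewrite mem_iota; case: ifP; lia.
case: ifP => le_d_i; first by rewrite (_ : i + _ = d + n) ?modnDr ?modn_small //; lia.
by rewrite (_ : i + _ = d) ?modn_small //; lia.
Qed.

Lemma foldl_pair_one_acc n right (avail : pred nat) xs asg acc :
  all (fun x : nat * int * int => x.2 == 0%R) xs ->
  (foldl (pair_one n right avail) (asg, acc) xs).2 = acc.
Proof.
elim: xs asg => [|[[i lab] c] xs IH] //= asg /andP[/eqP-> zero_xs].
rewrite /pair_one; case: [seq _ <- _ | _] => [|j _]; first exact: IH.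
by rewrite addr0 if_same IH.
Qed.

Section FreshPairing.

Variables (n : nat) (right : bool) (avail : pred nat) (D : seq nat).
Hypotheses (D_uniq : uniq D) (D_lt : {in D, forall j, j < n}).
Hypothesis availE : forall j, j < n -> avail j = (j \in D).

Lemma pair_one_fresh asg acc x :
  {subset map fst asg <= D} -> size asg < size D -> x.1.1 < n ->
  exists j acc', pair_one n right avail (asg, acc) x = ((j, x.1.2) :: asg, acc')
    /\ (j \in D) && (j \notin map fst asg).
Proof.
move=> sub_asg lt_asg; case: x => [[i lab] c] /= lt_i_n.
have [d D_d fresh_d] : exists2 d, d \in D & d \notin map fst asg.
  apply/allPn/negP => /allP sub_D.
  by have := uniq_leq_size D_uniq sub_D; rewrite size_map leqNgt lt_asg.
have lt_d_n := D_lt D_d.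
have : d \in [seq j <- cyc_order n i right | avail j && (j \notin map fst asg)].
  by rewrite mem_filter fresh_d availE // D_d mem_cyc_order.
case E: [seq _ <- _ | _] => [|j js] // _.
have : j \in [seq j <- cyc_order n i right | avail j && (j \notin map fst asg)].
  by rewrite E mem_head.
rewrite mem_filter mem_cyc_order // => /andP[/andP[avail_j fresh_j] lt_j_n].
by exists j; eexists; split; last by rewrite -availE // avail_j.
Qed.

Lemma foldl_pair_one xs asg acc :
  {subset map fst asg <= D} -> uniq (map fst asg) ->
  all (fun x : nat * int * int => x.1.1 < n) xs -> size asg + size xs <= size D ->
  exists new, [/\ (foldl (pair_one n right avail) (asg, acc) xs).1 = new ++ asg,
    map snd new = rev [seq x.1.2 | x <- xs], uniq (map fst (new ++ asg))
    & {subset map fst new <= D}].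
Proof.
elim: xs asg acc => [|x xs IH] asg acc sub_asg uniq_asg; first by exists [::].
move=> /andP[lt_x lt_xs] le_size.
have lt_asg : size asg < size D by apply: leq_trans le_size; rewrite /= addnS ltnS leq_addr.
have [j [acc' [pairE /andP[D_j fresh_j]]]] := pair_one_fresh acc sub_asg lt_asg lt_x.
rewrite [foldl _ _ _]/(foldl _ (pair_one n right avail (asg, acc) x) xs) pairE.
have uniq_asg' : uniq (map fst ((j, x.1.2) :: asg)) by rewrite /= fresh_j.
have sub_asg' : {subset map fst ((j, x.1.2) :: asg) <= D}.
  by move=> k; rewrite inE => /predU1P[->|/sub_asg].
have le_size' : size ((j, x.1.2) :: asg) + size xs <= size D by rewrite /= addSnnS.
have [new [-> snd_new uniq_new sub_new]] := IH _ acc' sub_asg' uniq_asg' lt_xs le_size'.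
exists (rcons new (j, x.1.2)); rewrite cat_rcons map_rcons snd_new rev_cons.
split=> // k; rewrite map_rcons mem_rcons inE => /predU1P[->|/sub_new] //.
Qed.

End FreshPairing.

Lemma lab_order_trans : transitive lab_order.
Proof. by move=> [a1 a2] [b1 b2] [c1 c2]; rewrite /lab_order /=; lia. Qed.

Lemma lab_order_total : total lab_order.
Proof. by move=> [a1 a2] [b1 b2]; rewrite /lab_order /=; lia. Qed.

Lemma lab_order_anti : antisymmetric lab_order.
Proof.
move=> [a1 a2] [b1 b2]; rewrite /lab_order /= => ab_ba.
by have [-> ->] : a1 = b1 /\ a2 = b2 by lia.
Qed.

Lemma lab_of_mem (s : seq (nat * int)) e d :
  uniq (map fst s) -> e \in s -> lab_of s e.1 d = e.2.
Proof.
elim: s => [|x s IH] //= /andP[fresh_x uniq_s]; rewrite inE => /predU1P[->|s_e].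
  by rewrite /lab_of /= mem_head eqxx.
have s_e1 : e.1 \in map fst s by apply: map_f.
have /negbTE e1_x : e.1 != x.1 by apply: contraNneq fresh_x => <-.
by move: (IH uniq_s s_e); rewrite /lab_of /= inE s_e1 e1_x eq_sym e1_x.
Qed.

Lemma lab_of_notin (s : seq (nat * int)) j d : j \notin map fst s -> lab_of s j d = d.
Proof. by rewrite /lab_of => /negbTE->. Qed.

Lemma perm_eq_graph (T1 T2 : eqType) (s : seq (T1 * T2)) (f : T1 -> T2) t :
  {in s, forall e, e.2 = f e.1} -> perm_eq (map fst s) t ->
  perm_eq s [seq (j, f j) | j <- t].
Proof.
move=> graph_s /(perm_map (fun j => (j, f j))); rewrite -map_comp.
suff -> : map ((fun j => (j, f j)) \o fst) s = s by [].
by rewrite -[RHS]map_id; apply/eq_in_map => -[j x] /graph_s /= ->.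
Qed.

Lemma map_subn_iotaS a m :
  [seq a.+1 - k | k <- iota 0 m.+1] = a.+1 :: [seq a - k | k <- iota 0 m].
Proof. by rewrite /= -[1]/(1 + 0) iotaDl -map_comp subn0. Qed.

Section RowStep.

Variables (n : nat) (R : nat -> seq nat).
Hypotheses (R_uniq : forall r, uniq (R r)) (R_lt : forall r, {in R r, forall j, j < n}).

Definition anti_cols r := [seq j <- iota 0 n | j \notin R r].

Definition particle_labels r (asg : seq (nat * int)) := [seq (j, lab_of asg j r%:Z) | j <- R r].

Definition anti_labels r := [seq (j, (r%:Z - 1)%R) | j <- anti_cols r].

Definition labelling_inv r (w asg : seq (nat * int)) : Prop :=
  perm_eq w (particle_labels r asg ++ anti_labels r) /\
  {in R r, forall j, (r%:Z <= lab_of asg j r%:Z)%R}.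

Lemma mem_anti_labels r p :
  p \in anti_labels r -> p.2 = (r%:Z - 1)%R /\ p.1 \in anti_cols r.
Proof. by case/mapP=> j anti_j ->. Qed.

Lemma mem_anti_cols r j : (j \in anti_cols r) = (j < n) && (j \notin R r).
Proof. by rewrite mem_filter mem_iota andbC. Qed.

Lemma size_R_leq r : size (R r) <= n.
Proof.
rewrite -[n](size_iota 0); apply: uniq_leq_size => // j /R_lt.
by rewrite mem_iota.
Qed.

Lemma perm_iota_cols r : perm_eq (iota 0 n) (R r ++ anti_cols r).
Proof.
rewrite -(perm_filterC (mem (R r))) perm_cat2r.
apply: uniq_perm; rewrite ?filter_uniq ?iota_uniq // => j.
by rewrite mem_filter mem_iota /=; case: (boolP (j \in R r)) => // /R_lt ->.
Qed.

Lemma size_anti_cols r : size (anti_cols r) = n - size (R r).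
Proof. by rewrite -[n](size_iota 0) (perm_size (perm_iota_cols r)) size_cat addKn. Qed.

Lemma sort_labelling r w asg :
  labelling_inv r w asg ->
  sort lab_order w = sort lab_order (particle_labels r asg) ++ anti_labels r.
Proof.
move=> [perm_w lab_ge].
have sorted_labels : sorted lab_order (sort lab_order (particle_labels r asg) ++ anti_labels r).
  rewrite (sorted_pairwise lab_order_trans) pairwise_cat -!(sorted_pairwise lab_order_trans).
  rewrite (sort_sorted lab_order_total) /=; apply/andP; split.
    apply/allrelP => _ _ /[!mem_sort] /mapP[j /lab_ge Rj ->] /mapP[k _ ->].
    by rewrite /lab_order /=; lia.
  rewrite sorted_map; apply: sub_sorted (sorted_filter leq_trans _ (iota_sorted 0 n)).
  by move=> j k le_jk; rewrite /lab_order /= eqxx le_jk orbT.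
move/(perm_sortP lab_order_total lab_order_trans lab_order_anti): perm_w => ->.
rewrite -(sorted_sort lab_order_trans sorted_labels).
apply/(perm_sortP lab_order_total lab_order_trans lab_order_anti).
by rewrite perm_cat2r perm_sym perm_sort.
Qed.

Definition maj_pairing r asg :=
  pair_all n true (fun j => j \in R r)
    [seq (p.1, p.2, (p.2 - (r.+1)%:Z + 1)%R) | p <- sort lab_order (particle_labels r.+1 asg)].

Definition particle_phase r asg :=
  foldl (pair_one n true (fun j => j \in R r)) (maj_pairing r asg)
    [seq (p.1, p.2, (p.2 - (r.+1)%:Z + 1)%R)
    | p <- take (size (R r) - size (R r.+1)) (anti_labels r.+1)].

Definition antiparticle_phase r :=
  pair_all n false (fun j => j \notin R r)
    [seq (p.1, (p.2 - 1)%R, (p.2 - (r.+1)%:Z + 1)%R)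
    | p <- rev (drop (size (R r) - size (R r.+1)) (anti_labels r.+1))].

Lemma maj_stepE r asg acc :
  maj_step n R (asg, acc) r.+1 = ((maj_pairing r asg).1, (acc + (maj_pairing r asg).2)%R).
Proof. by rewrite /maj_step /maj_pairing /=; case: pair_all. Qed.

Lemma majG_stepE r w asg acc :
  labelling_inv r.+1 w asg -> size (R r.+1) <= size (R r) ->
  majG_step n R (w, acc) r =
    ((particle_phase r asg).1 ++ (antiparticle_phase r).1,
     (acc + (particle_phase r asg).2 - (antiparticle_phase r).2)%R).
Proof.
move=> inv_w le_R.
have size_P : size (sort lab_order (particle_labels r.+1 asg)) = size (R r.+1).
  by rewrite size_sort size_map.
rewrite /majG_step (sort_labelling inv_w) take_cat drop_cat size_P ltnNge le_R /=.
rewrite /particle_phase /antiparticle_phase /maj_pairing {1}/pair_all map_cat foldl_cat.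
by case: foldl => ? ?; case: pair_all.
Qed.

Lemma particle_phase_wrap r asg : (particle_phase r asg).2 = (maj_pairing r asg).2.
Proof.
rewrite /particle_phase; case: maj_pairing => asg' acc'; apply: foldl_pair_one_acc.
by apply/allP=> _ /mapP[p /mem_take /mem_anti_labels[-> _] ->] /=; lia.
Qed.

Lemma antiparticle_phase_wrap r : (antiparticle_phase r).2 = 0%R.
Proof.
apply: foldl_pair_one_acc.
by apply/allP=> _ /mapP[p /[!mem_rev] /mem_drop /mem_anti_labels[-> _] ->] /=; lia.
Qed.

Lemma majG_step_wrap r w asg acc :
  labelling_inv r.+1 w asg -> size (R r.+1) <= size (R r) ->
  (majG_step n R (w, acc) r).2 = (maj_step n R (asg, acc) r.+1).2.
Proof.
move=> inv_w le_R; rewrite (majG_stepE acc inv_w le_R) maj_stepE /=.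
by rewrite particle_phase_wrap antiparticle_phase_wrap subr0.
Qed.

Lemma maj_pairing_props r asg :
  {in R r.+1, forall j, (r.+1%:Z <= lab_of asg j r.+1%:Z)%R} ->
  size (R r.+1) <= size (R r) ->
  [/\ uniq (map fst (maj_pairing r asg).1), {subset map fst (maj_pairing r asg).1 <= R r},
      size (maj_pairing r asg).1 = size (R r.+1)
    & {in (maj_pairing r asg).1, forall e, (r.+1%:Z <= e.2)%R}].
Proof.
move=> lab_ge le_R.
have availE j : j < n -> (j \in R r) = (j \in R r) by [].
rewrite /maj_pairing /pair_all; set xs := [seq _ | p <- sort _ _].
have lt_xs : all (fun x : nat * int * int => x.1.1 < n) xs.
  by apply/allP=> _ /mapP[_ /[!mem_sort] /mapP[j /R_lt lt_j ->] ->].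
have size_xs : size xs <= size (R r) by rewrite size_map size_sort size_map.
have sub_nil : {subset map fst ([::] : seq (nat * int)) <= R r} by [].
have [new []] := foldl_pair_one true (R_uniq r) (@R_lt r) availE 0%R sub_nil isT lt_xs size_xs.
rewrite cats0 => -> snd_new uniq_new sub_new.
split=> //; first by rewrite -(size_map snd) snd_new size_rev !size_map size_sort size_map.
move=> e /(map_f snd); rewrite snd_new mem_rev -map_comp.
by case/mapP=> _ /[!mem_sort] /mapP[j /lab_ge ge_j ->] ->.
Qed.

Lemma maj_pairing_lab_ge r asg :
  {in R r.+1, forall j, (r.+1%:Z <= lab_of asg j r.+1%:Z)%R} ->
  size (R r.+1) <= size (R r) ->
  {in R r, forall j, (r%:Z <= lab_of (maj_pairing r asg).1 j r%:Z)%R}.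
Proof.
move=> lab_ge le_R j _; have [uniqA _ _ geA] := maj_pairing_props lab_ge le_R.
have [/mapP[e A_e ->]|fresh_j] := boolP (j \in map fst (maj_pairing r asg).1).
  by rewrite (lab_of_mem _ uniqA A_e); apply: le_trans (geA e A_e); rewrite lez_nat.
by rewrite lab_of_notin.
Qed.

Lemma perm_particle_phase r asg :
  {in R r.+1, forall j, (r.+1%:Z <= lab_of asg j r.+1%:Z)%R} ->
  size (R r.+1) <= size (R r) ->
  perm_eq (particle_phase r asg).1 (particle_labels r (maj_pairing r asg).1).
Proof.
move=> lab_ge le_R; have [uniqA subA sizeA _] := maj_pairing_props lab_ge le_R.
rewrite /particle_phase /particle_labels.
case: (maj_pairing r asg) uniqA subA sizeA => A acc /= uniqA subA sizeA.
set k := size (R r) - size (R r.+1).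
have size_take : size (take k (anti_labels r.+1)) = k.
  by rewrite size_takel // size_map size_anti_cols leq_sub2r ?size_R_leq.
have availE j : j < n -> (j \in R r) = (j \in R r) by [].
set xs := [seq _ | p <- take k _].
have lt_xs : all (fun x : nat * int * int => x.1.1 < n) xs.
  by apply/allP=> _ /mapP[p /mem_take /mem_anti_labels[_] /[!mem_anti_cols] /andP[lt_p _] ->].
have size_xs : size A + size xs <= size (R r) by rewrite size_map size_take sizeA subnKC.
have [new [-> snd_new uniq_new sub_new]] :=
  foldl_pair_one true (R_uniq r) (@R_lt r) availE acc subA uniqA lt_xs size_xs.
apply: perm_eq_graph => [e|].
  rewrite mem_cat => /orP[new_e|A_e]; last by rewrite (lab_of_mem _ uniqA A_e).
  rewrite lab_of_notin; last first.
    move: uniq_new; rewrite map_cat cat_uniq => /and3P[_ /hasPn fresh _].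
    by apply/negP => /fresh; rewrite map_f.
  move: (map_f snd new_e); rewrite snd_new mem_rev -map_comp.
  by case/mapP=> p /mem_take /mem_anti_labels[p2 _] ->; rewrite /= p2; lia.
apply: uniq_perm; rewrite ?R_uniq //.
apply: (uniq_min_size uniq_new _ _).2 => [j|].
  by rewrite map_cat mem_cat => /orP[/sub_new|/subA].
by rewrite size_map size_cat -(size_map snd) snd_new size_rev !size_map size_take sizeA subnK.
Qed.

Lemma perm_antiparticle_phase r :
  size (R r.+1) <= size (R r) -> perm_eq (antiparticle_phase r).1 (anti_labels r).
Proof.
move=> le_R; set k := size (R r) - size (R r.+1).
have size_drop : size (drop k (anti_labels r.+1)) = size (anti_cols r).
  by rewrite size_drop size_map !size_anti_cols; have := size_R_leq r; lia.
have anti_uniq : uniq (anti_cols r) by rewrite filter_uniq ?iota_uniq.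
have anti_lt : {in anti_cols r, forall j, j < n} by move=> j /[!mem_anti_cols] /andP[].
have availE j : j < n -> (j \notin R r) = (j \in anti_cols r) by rewrite mem_anti_cols => ->.
rewrite /antiparticle_phase /pair_all; set xs := [seq _ | p <- rev _].
have lt_xs : all (fun x : nat * int * int => x.1.1 < n) xs.
  apply/allP=> _ /mapP[p /[!mem_rev] /mem_drop /mem_anti_labels[_ anti_p] ->].
  by move: anti_p; rewrite mem_anti_cols => /andP[].
have size_xs : size xs <= size (anti_cols r) by rewrite size_map size_rev size_drop.
have sub_nil : {subset map fst ([::] : seq (nat * int)) <= anti_cols r} by [].
have [new []] := foldl_pair_one false anti_uniq anti_lt availE 0%R sub_nil isT lt_xs size_xs.
rewrite cats0 => -> snd_new uniq_new sub_new.
apply: perm_eq_graph => [e /(map_f snd)|].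
  rewrite snd_new mem_rev -map_comp.
  by case/mapP=> p /[!mem_rev] /mem_drop /mem_anti_labels[p2 _] ->; rewrite /= p2; lia.
apply: uniq_perm => //; apply: (uniq_min_size uniq_new sub_new _).2.
by rewrite size_map -(size_map snd) snd_new size_rev !size_map size_rev size_drop.
Qed.

Lemma labelling_inv_step r w asg acc :
  labelling_inv r.+1 w asg -> size (R r.+1) <= size (R r) ->
  labelling_inv r (majG_step n R (w, acc) r).1 (maj_step n R (asg, acc) r.+1).1.
Proof.
move=> inv_w le_R; have [_ lab_ge] := inv_w.
rewrite (majG_stepE acc inv_w le_R) maj_stepE; split; last exact: maj_pairing_lab_ge.
by rewrite perm_cat ?perm_particle_phase ?perm_antiparticle_phase.
Qed.

Lemma foldl_majG_step_wrap m w asg acc :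
  (forall r, 0 < r <= m -> size (R r.+1) <= size (R r)) ->
  labelling_inv m.+1 w asg ->
  (foldl (majG_step n R) (w, acc) [seq m - k | k <- iota 0 m]).2 =
  (foldl (maj_step n R) (asg, acc) [seq m.+1 - k | k <- iota 0 m]).2.
Proof.
elim: m w asg acc => [//|m IH] w asg acc le_R inv_w.
have le_Rm : size (R m.+2) <= size (R m.+1) by rewrite le_R ?leqnn.
rewrite !map_subn_iotaS [majG_step]lock [maj_step]lock /= -!lock.
rewrite (surjective_pairing (majG_step _ _ _ _)) (surjective_pairing (maj_step _ _ _ _)).
rewrite (majG_step_wrap acc inv_w le_Rm).
apply: IH (labelling_inv_step acc inv_w le_Rm) => r /andP[r_gt0 le_r_m].
by apply: le_R; rewrite r_gt0 ltnW.
Qed.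

Lemma labelling_inv_top r :
  labelling_inv r [seq (j, (if j \in R r then r%:Z else r%:Z - 1)%R) | j <- iota 0 n] [::].
Proof.
split=> [|j _]; last by rewrite lab_of_notin.
set F := fun j => _.
have -> : particle_labels r [::] = map F (R r).
  by apply/eq_in_map => j R_j; rewrite /F R_j lab_of_notin.
have -> : anti_labels r = map F (anti_cols r).
  by apply/eq_in_map => j; rewrite mem_anti_cols /F => /andP[_ /negbTE->].
by rewrite -map_cat perm_map ?perm_iota_cols.
Qed.

End RowStep.

Lemma cols_uniq n (B : {set 'I_n}) : uniq (cols B).
Proof. by rewrite map_inj_uniq ?enum_uniq //; apply: val_inj. Qed.

Lemma cols_lt n (B : {set 'I_n}) : {in cols B, forall j, j < n}.
Proof. by move=> _ /mapP[j _ ->]; apply: ltn_ord. Qed.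

Lemma size_cols n (B : {set 'I_n}) : size (cols B) = #|B|.
Proof. by rewrite size_map cardE. Qed.

Lemma leq_conj_part la j k : j <= k -> conj_part la k <= conj_part la j.
Proof. by move=> le_jk; apply: sub_count => p /=; apply: leq_trans. Qed.

Theorem lemma4p30 (la : seq nat) (n : nat) (M : seq {set 'I_n}) :
  is_partition la -> (plength la <= n)%N -> MLQ la M ->
  majG la M = maj la M.
Proof.
move=> _ _ [_ card_row].
pose R r := cols (row M r).
have le_R r : 0 < r < pfirst la -> size (R r.+1) <= size (R r).
  by move=> bounds_r; rewrite !size_cols !card_row ?leq_conj_part //; lia.
rewrite /majG /maj -/R; case: (pfirst la) le_R => [//|m] le_R.
rewrite /majG_cols /maj_cols /=.
have R_uniq r : uniq (R r) by apply: cols_uniq.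
have R_lt r : {in R r, forall j, j < n} by apply: cols_lt.
apply: (foldl_majG_step_wrap R_uniq R_lt) => [r bounds_r|]; first by apply: le_R.
exact: labelling_inv_top.
Qed.
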